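(* Let $G$ be a flattened grammar and $\mathrm{CPS}(G)$ its CPS transformation (with respect to an arbitrary fixed choice of CPS-triggering nonterminals), and let $H$ be the grammar whose productions are those of $G$ together with those of $\mathrm{CPS}(G)$. Then for every $\lambda\in\Sigma^*$: (1) For every symbol $X$ of $G$, if $\hat X\Rightarrow^*\lambda$ in $\mathrm{CPS}(G)$ in $n$ steps, then $X\,\tau_X\Rightarrow^*\lambda$ in $H$ in $n$ steps. (2) For every dotted production $\Pi=X\to\alpha_1\cdots\alpha_{i-1}\cdot\alpha_i\cdots\alpha_r$ of $G$, if $\tau_\Pi\Rightarrow^*\lambda$ in $\mathrm{CPS}(G)$ in $n$ steps, then $\alpha_i\cdots\alpha_r\,\tau_X\Rightarrow^*\lambda$ in $H$ in $n$ steps.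
   Context: BNF grammars and flattening. A BNF grammar over terminals $\Sigma$ is a list of rules $X\to e$, where $X$ is a nonterminal (called top-level) and $e$ is an expression: a single symbol; a concatenation $e_1\cdots e_n$ ($n\ge 0$, the case $n=0$ being $\varepsilon$); an alternation $e_1\mid\cdots\mid e_n$; an optional $e_1?$; or a repetition $e_1^*$. The procedure $\mathrm{Flatten}(X,e)$ emits context-free productions: (i) if $e=\alpha$ is a single symbol, emit $X\to\alpha$; (ii) if $e=e_1\cdots e_n$, for each $i$ let $\alpha_i=e_i$ if $e_i$ is a single symbol, and otherwise let $\alpha_i$ be a fresh nonterminal and call $\mathrm{Flatten}(\alpha_i,e_i)$; emit $X\to\alpha_1\cdots\alpha_n$; (iii) if $e=e_1\mid\cdots\mid e_n$, call $\mathrm{Flatten}(X,e_i)$ for each $i$; (iv) if $e=e_1?$, call $\mathrm{Flatten}(X,e_1\mid\varepsilon)$; (v) if $e=e_1^*$, let $\alpha$ be fresh, call $\mathrm{Flatten}(\alpha,e_1)$ and emit $X\to\alpha X$ and $X\to\varepsilon$. The flattened grammar $G$ consists of all productions emitted by $\mathrm{Flatten}(X,e)$ over all rules $X\to e$; its start symbol $S$ is a top-level nonterminal. CPS transformation. A nonterminal is CPS-eligible if it was created as a fresh symbol during flattening. Fix an arbitrary subset of the CPS-eligible nonterminals, called CPS-triggering (terminals and top-level nonterminals are never CPS-triggering). For every nonterminal $Y$ let $\hat Y$ be a new symbol; for a terminal $\sigma$ set $\hat\sigma=\sigma$. Define mutually recursive procedures. $\mathrm{CPSProd}(X\to\alpha_1\cdots\alpha_i\cdot\alpha_{i+1}\cdots\alpha_r,\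 \tau)$, where $\tau$ is a string of symbols: if $i=0$, add the production $\hat X\to\tau$ to $\mathrm{CPS}(G)$; if $i>0$ and $\alpha_i$ is not CPS-triggering, call $\mathrm{CPSProd}(X\to\alpha_1\cdots\alpha_{i-1}\cdot\alpha_i\cdots\alpha_r,\ \hat\alpha_i\tau)$; if $i>0$, $\alpha_i$ is CPS-triggering, $i=r$ and $X=\alpha_r$ (i.e. the dotted production has the form $\alpha\to\gamma\alpha\,\cdot$), call $\mathrm{CPSProd}(X\to\alpha_1\cdots\alpha_{r-1}\cdot\alpha_r,\ \hat\alpha_r)$; otherwise ($\alpha_i$ CPS-triggering, not of that form) call $\mathrm{CPSSym}(\alpha_i,\tau)$ and then $\mathrm{CPSProd}(X\to\alpha_1\cdots\alpha_{i-1}\cdot\alpha_i\cdots\alpha_r,\ \hat\alpha_i)$. $\mathrm{CPSSym}(X,\tau)$: for each production $X\to\eta$ of $G$, call $\mathrm{CPSProd}(X\to\eta\,\cdot,\ \tau)$. The grammar $\mathrm{CPS}(G)$ consists of all productions added when $\mathrm{CPSSym}(X,\varepsilon)$ is called for every non-CPS-triggering nonterminal $X$; its start symbol is $\hat S$. Tail contexts. During this transformation $\mathrm{CPSSym}(X,\cdot)$ is invoked exactly once for each nonterminal $X$, and $\mathrm{CPSProd}(\Pi,\cdot)$ exactly once for each dotted production $\Pi$ of $G$. For a nonterminal $X$, $\tau_X$ denotes the second argument of that invocation of $\mathrm{CPSSym}(X,\cdot)$; for a terminal $X$, $\tau_X=\varepsilon$. For a dotted production $\Pi$, $\tau_\Pi$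 is the second argument of the invocation $\mathrm{CPSProd}(\Pi,\cdot)$. ''$A\Rightarrow^* w$ in $n$ steps'' means there is a derivation from $A$ to $w$ using exactly $n$ production applications. *)

From Stdlib Require Import List.
Import ListNotations.
Set Implicit Arguments.

Section Grammar.
Variables (Sigma Nt : Type).

(** Symbols of the flattened grammar: terminals, top-level nonterminals
    (names from the BNF rules) and fresh nonterminals created by Flatten,
    indexed by a counter. *)
Inductive sym : Type :=
| T  : Sigma -> sym
| NT : Nt -> sym
| Fr : nat -> sym.

Definition is_nonterm (X : sym) : Prop :=
  match X with T _ => False | _ => True end.

Inductive bexp : Type :=
| BSym  : sym -> bexp            (* single symbol; only T/NT used, see [wf_bexp] *)
| BCat  : list bexp -> bexp      (* concatenation; BCat [] is epsilon *)
| BAlt  : list bexp -> bexp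
| BOpt  : bexp -> bexp
| BStar : bexp -> bexp.

Fixpoint wf_bexp (e : bexp) : Prop :=
  match e with
  | BSym (Fr _) => False
  | BSym _ => True
  | BCat es | BAlt es =>
      (fix go (es : list bexp) : Prop :=
         match es with [] => True | e1 :: es' => wf_bexp e1 /\ go es' end) es
  | BOpt e1 | BStar e1 => wf_bexp e1
  end.

Definition prod := (sym * list sym)%type.

Fixpoint flat (X : sym) (e : bexp) (c : nat) {struct e} : list prod * nat :=
  match e with
  | BSym a => ([(X, [a])], c)
  | BCat es =>
      let fix go (es : list bexp) (c : nat) : list prod * list sym * nat :=
        match es with
        | [] => ([], [], c)
        | e1 :: es' =>
            match e1 with
            | BSym a =>
                let '(ps, rhs, c') := go es' c in (ps, a :: rhs, c')
            | _ =>
                let '(ps1, c1) := flat (Fr c) e1 (S c) in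
                let '(ps2, rhs, c2) := go es' c1 in
                (ps1 ++ ps2, Fr c :: rhs, c2)
            end
        end in
      let '(ps, rhs, c') := go es c in (ps ++ [(X, rhs)], c')
  | BAlt es =>
      let fix go (es : list bexp) (c : nat) : list prod * nat :=
        match es with
        | [] => ([], c)
        | e1 :: es' =>
            let '(ps1, c1) := flat X e1 c in
            let '(ps2, c2) := go es' c1 in (ps1 ++ ps2, c2)
        end in
      go es c
  | BOpt e1 =>
      (* Flatten(X, e1 | epsilon) *)
      let '(ps, c') := flat X e1 c in (ps ++ [(X, [])], c')
  | BStar e1 =>
      let a := Fr c in
      let '(ps, c') := flat a e1 (S c) in
      (ps ++ [(X, [a; X]); (X, [])], c')
  end.

Fixpoint flatten_from (rules : list (Nt * bexp)) (c : nat) : list prod :=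
  match rules with
  | [] => []
  | (x, e) :: rs =>
      let '(ps, c') := flat (NT x) e c in ps ++ flatten_from rs c'
  end.

Definition flatten (rules : list (Nt * bexp)) : list prod := flatten_from rules 0.

Definition symG (G : list prod) (X : sym) : Prop :=
  exists p, In p G /\ (fst p = X \/ In X (snd p)).

Inductive hsym : Type :=
| Plain : sym -> hsym
| Hat   : sym -> hsym.

Definition hat (X : sym) : hsym :=
  match X with T a => Plain (T a) | _ => Hat X end.

Definition trigS (trig : nat -> bool) (X : sym) : Prop :=
  match X with Fr n => trig n = true | _ => False end.

(** The invocations of CPSSym / CPSProd made by the CPS transformation, as
    the least set of calls generated by the top-level calls CPSSym(X, eps)
    (X a non-triggering nonterminal of G) and the procedure bodies.
    [cps_prod X alpha k tau] is the call CPSProd(X -> alpha_1..alpha_k . alpha_{k+1}..alpha_r, tau). *)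
Inductive cps_sym (G : list prod) (trig : nat -> bool) : sym -> list hsym -> Prop :=
| cps_root X :
    symG G X -> is_nonterm X -> ~ trigS trig X -> cps_sym G trig X []
| cps_call X alpha k tau a :
    cps_prod G trig X alpha (S k) tau ->
    nth_error alpha k = Some a -> trigS trig a ->
    ~ (S k = length alpha /\ X = a) ->
    cps_sym G trig a tau
with cps_prod (G : list prod) (trig : nat -> bool) :
    sym -> list sym -> nat -> list hsym -> Prop :=
| cps_start X eta tau :
    cps_sym G trig X tau -> In (X, eta) G ->
    cps_prod G trig X eta (length eta) tau
| cps_nontrig X alpha k tau a :
    cps_prod G trig X alpha (S k) tau ->
    nth_error alpha k = Some a -> ~ trigS trig a ->
    cps_prod G trig X alpha k (hat a :: tau)
| cps_self X alpha k tau :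
    cps_prod G trig X alpha (S k) tau ->
    nth_error alpha k = Some X -> trigS trig X -> S k = length alpha ->
    cps_prod G trig X alpha k [hat X]
| cps_trig X alpha k tau a :
    cps_prod G trig X alpha (S k) tau ->
    nth_error alpha k = Some a -> trigS trig a ->
    ~ (S k = length alpha /\ X = a) ->
    cps_prod G trig X alpha k [hat a].

Definition hgrammar := hsym -> list hsym -> Prop.

(** The productions of CPS(G): X^ -> tau for each call CPSProd(X -> . eta, tau). *)
Definition cps_grammar (G : list prod) (trig : nat -> bool) : hgrammar :=
  fun A beta => exists X eta, A = hat X /\ cps_prod G trig X eta 0 beta.

Definition embG (G : list prod) : hgrammar :=
  fun A beta => exists X alpha, In (X, alpha) G /\ A = Plain X /\ beta = map Plain alpha.

Definition Hgrammar (G : list prod) (trig : nat -> bool) : hgrammar :=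
  fun A beta => embG G A beta \/ cps_grammar G trig A beta.

Definition dstep (P : hgrammar) (u v : list hsym) : Prop :=
  exists A beta l r, P A beta /\ u = l ++ A :: r /\ v = l ++ beta ++ r.

Inductive derivesN (P : hgrammar) : list hsym -> list hsym -> nat -> Prop :=
| dN_refl u : derivesN P u u 0
| dN_step u w v n : dstep P u w -> derivesN P w v n -> derivesN P u v (S n).

Definition word (lam : list Sigma) : list hsym := map (fun a => Plain (T a)) lam.

(** tau_X: second argument of the invocation of CPSSym(X, .) for a
    nonterminal X; epsilon for a terminal. *)
Definition tau_sym (G : list prod) (trig : nat -> bool) (X : sym) (tau : list hsym) : Prop :=
  match X with T _ => tau = [] | _ => cps_sym G trig X tau end.

End Grammar.

From Stdlib Require Import List Lia Arith.
Import ListNotations.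

(* Flattening creates each fresh nonterminal at exactly one position of one
   right-hand side (apart from the recursive tail of [alpha -> gamma alpha]),
   so CPSSym is invoked on it from a single place and its tail context is well
   defined.  Soundness then goes by strong induction on the length of the CPS
   derivation, and inside by induction on how tau_Pi was built: a
   non-triggering alpha_i contributes hat alpha_i in front of the later
   context, which (1) expands at a smaller length; a triggering alpha_i gives
   tau_Pi = hat alpha_i, which (1) expands to alpha_i tau_{alpha_i}, and
   tau_{alpha_i} is by construction the context of the next dotted production. *)

Arguments NT {Sigma Nt}.
Arguments Fr {Sigma Nt}.
Arguments cps_root {Sigma Nt G trig X}.
Arguments cps_call {Sigma Nt G trig X alpha k tau a}.

Section Derivations.
Context {Sigma Nt : Type}.
Notation hsym := (hsym Sigma Nt).
Notation hgrammar := (hgrammar Sigma Nt).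
Implicit Types (P Q : hgrammar) (u v w : list hsym).

Lemma derivesN_trans P u v w n m :
  derivesN P u v n -> derivesN P v w m -> derivesN P u w (n + m).
Proof. induction 1; intros; simpl; [assumption | econstructor; eauto]. Qed.

Lemma derivesN_context {P u v n} x y :
  derivesN P u v n -> derivesN P (x ++ u ++ y) (x ++ v ++ y) n.
Proof.
  induction 1 as [u | u w v n (A & beta & l & r & HP & -> & ->) _ IH]; [constructor|].
  econstructor; [|exact IH]; exists A, beta, (x ++ l), (r ++ y).
  repeat rewrite <- app_assoc; simpl; repeat rewrite <- app_assoc; auto.
Qed.

Lemma derivesN_app {P u1 w1 n1 u2 w2 n2} :
  derivesN P u1 w1 n1 -> derivesN P u2 w2 n2 -> derivesN P (u1 ++ u2) (w1 ++ w2) (n1 + n2).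
Proof.
  intros H1 H2; apply derivesN_trans with (w1 ++ u2).
  - exact (derivesN_context [] u2 H1).
  - pose proof (derivesN_context w1 [] H2) as H; rewrite !app_nil_r in H; exact H.
Qed.

Lemma derivesN_app_inv {P u v w n} : derivesN P (u ++ v) w n ->
  exists w1 w2 n1 n2, w = w1 ++ w2 /\ n = n1 + n2 /\ derivesN P u w1 n1 /\ derivesN P v w2 n2.
Proof.
  remember (u ++ v) as uv eqn:Euv; intros H; revert u v Euv.
  induction H as [uv | uv w0 w n (A & beta & l & r & HP & Eu & ->) _ IH]; intros u v Euv.
  - subst; exists u, v, 0, 0; repeat split; constructor.
  - rewrite Euv in Eu; symmetry in Eu; apply app_eq_app in Eu as [m [[-> Ev] | [-> Ev]]].
    + (* the rewritten symbol lies in [v] *)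
      subst v; destruct (IH u (m ++ beta ++ r)) as (w1 & w2 & n1 & n2 & -> & -> & D1 & D2);
        [now rewrite <- !app_assoc|].
      exists w1, w2, n1, (S n2); split; [reflexivity | split; [lia | split; [exact D1 |]]].
      econstructor; [exists A, beta, m, r; auto | exact D2].
    + destruct m as [|a m]; simpl in Ev.
      * subst v; rewrite app_nil_r.
        destruct (IH l (beta ++ r)) as (w1 & w2 & n1 & n2 & -> & -> & D1 & D2); [reflexivity|].
        exists w1, w2, n1, (S n2); split; [reflexivity | split; [lia | split; [exact D1 |]]].
        econstructor; [exists A, beta, [], r; auto | exact D2].
      * injection Ev as <- ->.
        destruct (IH (l ++ beta ++ m) v) as (w1 & w2 & n1 & n2 & -> & -> & D1 & D2);
          [now rewrite <- !app_assoc|].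
        exists w1, w2, (S n1), n2; split; [reflexivity | split; [lia | split; [| exact D2]]].
        econstructor; [exists A, beta, l, m; auto | exact D1].
Qed.

Lemma derivesN_mono P Q u v n :
  (forall A beta, P A beta -> Q A beta) -> derivesN P u v n -> derivesN Q u v n.
Proof.
  intros HPQ; induction 1 as [u | u w v n (A & beta & l & r & HP & Eu & Ew) _ IH]; [constructor|].
  apply dN_step with w; [exists A, beta, l, r; auto | exact IH].
Qed.

Lemma word_app (lam1 lam2 : list Sigma) : word Nt (lam1 ++ lam2) = word Nt lam1 ++ word Nt lam2.
Proof. apply map_app. Qed.

Lemma derivesN_app_word_inv {P u v} lam n :
  derivesN P (u ++ v) (word Nt lam) n ->
  exists lam1 lam2 n1 n2, lam = lam1 ++ lam2 /\ n = n1 + n2 /\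
    derivesN P u (word Nt lam1) n1 /\ derivesN P v (word Nt lam2) n2.
Proof.
  intros H; destruct (derivesN_app_inv H) as (w1 & w2 & n1 & n2 & Ew & -> & D1 & D2).
  destruct (map_eq_app _ _ _ _ Ew) as (lam1 & lam2 & -> & <- & <-).
  exists lam1, lam2, n1, n2; auto.
Qed.
End Derivations.

Section Flatten.
Context {Sigma Nt : Type}.
Notation sym := (sym Sigma Nt).
Notation bexp := (bexp Sigma Nt).
Notation prod := (prod Sigma Nt).

Fixpoint bexp_nested_ind (P : bexp -> Prop) (Hsym : forall a, P (BSym a))
  (Hcat : forall es, Forall P es -> P (BCat es)) (Halt : forall es, Forall P es -> P (BAlt es))
  (Hopt : forall e, P e -> P (BOpt e)) (Hstar : forall e, P e -> P (BStar e)) (e : bexp) : P e :=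
  let rec := @bexp_nested_ind P Hsym Hcat Halt Hopt Hstar in
  let fix all (es : list bexp) : Forall P es :=
    match es with [] => Forall_nil _ | e1 :: es' => Forall_cons _ (rec e1) (all es') end in
  match e with
  | BSym a => Hsym a
  | BCat es => Hcat es (all es)
  | BAlt es => Halt es (all es)
  | BOpt e1 => Hopt e1 (rec e1)
  | BStar e1 => Hstar e1 (rec e1)
  end.

(* The local fixpoints of [flat], lifted to the top level. *)
Fixpoint flat_cat_list (es : list bexp) (c : nat) : list prod * list sym * nat :=
  match es with
  | [] => ([], [], c)
  | BSym a :: es' => let '(ps, rhs, c') := flat_cat_list es' c in (ps, a :: rhs, c')
  | e1 :: es' =>
      let '(ps1, c1) := flat (Fr c) e1 (S c) in
      let '(ps2, rhs, c2) := flat_cat_list es' c1 in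
      (ps1 ++ ps2, Fr c :: rhs, c2)
  end.

Section FlatAlt.
Variable X : sym.
Fixpoint flat_alt_list (es : list bexp) (c : nat) : list prod * nat :=
  match es with
  | [] => ([], c)
  | e1 :: es' =>
      let '(ps1, c1) := flat X e1 c in
      let '(ps2, c2) := flat_alt_list es' c1 in (ps1 ++ ps2, c2)
  end.
End FlatAlt.

Lemma flat_BCat X es c :
  flat X (BCat es) c = let '(ps, rhs, c') := flat_cat_list es c in (ps ++ [(X, rhs)], c').
Proof. reflexivity. Qed.

Lemma flat_BAlt X es c : flat X (BAlt es) c = flat_alt_list X es c.
Proof. reflexivity. Qed.

(* Position [k] of the right-hand side of [p] invokes CPSSym on [Fr d]; the
   tail position of [alpha -> gamma alpha] is excluded, as in CPSProd. *)
Definition calls (p : prod) (k d : nat) : Prop :=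
  nth_error (snd p) k = Some (Fr d) /\ ~ (S k = length (snd p) /\ fst p = Fr d).

Definition unique_calls (ps : list prod) : Prop :=
  forall p1 k1 p2 k2 d, In p1 ps -> In p2 ps -> calls p1 k1 d -> calls p2 k2 d ->
  p1 = p2 /\ k1 = k2.

Definition calls_between (lo hi : nat) (ps : list prod) : Prop :=
  forall p k d, In p ps -> calls p k d -> lo <= d < hi.

Definition unique_calls_in (lo hi : nat) (ps : list prod) : Prop :=
  lo <= hi /\ calls_between lo hi ps /\ unique_calls ps.

Lemma unique_calls_app ps1 ps2 : unique_calls ps1 -> unique_calls ps2 ->
  (forall p1 k1 p2 k2 d, In p1 ps1 -> In p2 ps2 -> calls p1 k1 d -> calls p2 k2 d -> False) ->
  unique_calls (ps1 ++ ps2).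
Proof.
  intros U1 U2 Hdisj p1 k1 p2 k2 d Hp1 Hp2 Hc1 Hc2.
  apply in_app_iff in Hp1 as [Hp1 | Hp1]; apply in_app_iff in Hp2 as [Hp2 | Hp2]; eauto;
    exfalso; eauto.
Qed.

Lemma unique_calls_in_app lo mid hi ps1 ps2 :
  unique_calls_in lo mid ps1 -> unique_calls_in mid hi ps2 -> unique_calls_in lo hi (ps1 ++ ps2).
Proof.
  intros (Hlo1 & B1 & U1) (Hlo2 & B2 & U2); split; [lia | split].
  - intros p k d Hp Hc; apply in_app_iff in Hp as [Hp | Hp];
      [specialize (B1 p k d Hp Hc) | specialize (B2 p k d Hp Hc)]; lia.
  - apply unique_calls_app; [exact U1 | exact U2 |].
    intros p1 k1 p2 k2 d Hp1 Hp2 Hc1 Hc2; specialize (B1 _ _ _ Hp1 Hc1); specialize (B2 _ _ _ Hp2 Hc2); lia.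
Qed.

Lemma unique_calls_in_weaken lo lo' hi ps : lo <= lo' -> unique_calls_in lo' hi ps -> unique_calls_in lo hi ps.
Proof.
  intros Hlo (Hlo' & B & U); split; [lia | split; [|exact U]].
  intros p k d Hp Hc; specialize (B p k d Hp Hc); lia.
Qed.

Lemma unique_calls_in_app_comm lo hi ps1 ps2 : unique_calls_in lo hi (ps1 ++ ps2) -> unique_calls_in lo hi (ps2 ++ ps1).
Proof.
  intros (Hlo & B & U); split; [exact Hlo | split].
  - intros p k d Hp; apply B; apply in_app_iff in Hp; apply in_app_iff; tauto.
  - intros p1 k1 p2 k2 d Hp1 Hp2; apply U;
      [apply in_app_iff in Hp1 | apply in_app_iff in Hp2]; apply in_app_iff; tauto.
Qed.

Lemma unique_calls_in_no_calls c ps : (forall p k d, In p ps -> ~ calls p k d) -> unique_calls_in c c ps.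
Proof.
  intros H; split; [lia | split].
  - intros p k d Hp Hc; destruct (H p k d Hp Hc).
  - intros p1 k1 p2 k2 d Hp1 _ Hc1; destruct (H p1 k1 d Hp1 Hc1).
Qed.

Lemma no_calls_atom X a : (forall d, a <> Fr d) -> forall k d, ~ calls (X, [a]) k d.
Proof. intros Ha [|[|k]] d [Hn _]; simpl in Hn; try discriminate; injection Hn; apply Ha. Qed.

Lemma unique_calls_in_star_rule X c : unique_calls_in c (S c) [(X, [Fr c; X])].
Proof.
  assert (Hcall : forall k d, calls (X, [Fr c; X]) k d -> k = 0 /\ d = c).
  { intros [|[|[|k]]] d [Hn Hne]; simpl in Hn; try discriminate.
    - injection Hn as <-; auto.
    - injection Hn as ->; destruct Hne; auto. }
  split; [lia | split].
  - intros p k d [<- | []] Hc; destruct (Hcall k d Hc) as [_ ->]; lia.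
  - intros p1 k1 p2 k2 d [<- | []] [<- | []] Hc1 Hc2.
    destruct (Hcall _ _ Hc1) as [-> _], (Hcall _ _ Hc2) as [-> _]; auto.
Qed.

Definition fresh_indices (l : list sym) : list nat :=
  flat_map (fun a => match a with Fr d => [d] | _ => [] end) l.

Lemma nth_error_fresh_indices l k d : nth_error l k = Some (Fr d) -> In d (fresh_indices l).
Proof.
  intros H; apply in_flat_map; exists (Fr d); split; [exact (nth_error_In _ _ H) | left; auto].
Qed.

Lemma nth_error_fresh_unique l k1 k2 d : NoDup (fresh_indices l) ->
  nth_error l k1 = Some (Fr d) -> nth_error l k2 = Some (Fr d) -> k1 = k2.
Proof.
  revert k1 k2; induction l as [|a l IH]; intros [|k1] [|k2] Hnd H1 H2;
    simpl in H1, H2; try discriminate; auto.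
  - injection H1 as ->; inversion Hnd; exfalso; eauto using nth_error_fresh_indices.
  - injection H2 as ->; inversion Hnd; exfalso; eauto using nth_error_fresh_indices.
  - f_equal; apply (IH k1 k2); auto.
    destruct a; auto; apply (NoDup_cons_iff n (fresh_indices l)); exact Hnd.
Qed.

(* Invariant of [flat_cat_list]: the productions emitted so far and the
   right-hand side under construction, whose fresh symbols are distinct and
   not yet called. *)
Definition rhs_ok (lo hi : nat) (ps : list prod) (rhs : list sym) : Prop :=
  unique_calls_in lo hi ps /\ NoDup (fresh_indices rhs) /\
  forall d, In d (fresh_indices rhs) -> lo <= d < hi /\ forall p k, In p ps -> ~ calls p k d.

Lemma rhs_ok_nil c : rhs_ok c c [] [].
Proof. split; [apply unique_calls_in_no_calls; intros ? ? ? [] | split; [constructor | intros ? []]]. Qed.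

Lemma rhs_ok_atom lo hi ps rhs a :
  (forall d, a <> Fr d) -> rhs_ok lo hi ps rhs -> rhs_ok lo hi ps (a :: rhs).
Proof. intros Ha H; destruct a as [| |d]; [exact H | exact H | destruct (Ha d eq_refl)]. Qed.

Lemma rhs_ok_fresh c c1 c2 ps1 ps2 rhs :
  unique_calls_in (S c) c1 ps1 -> rhs_ok c1 c2 ps2 rhs -> rhs_ok c c2 (ps1 ++ ps2) (Fr c :: rhs).
Proof.
  intros Hps1 ((Hc12 & B2 & U2) & Hnd & Hrhs).
  pose proof Hps1 as (Hc1 & B1 & _).
  split; [|split].
  - apply unique_calls_in_app with c1; [|exact (conj Hc12 (conj B2 U2))].
    apply unique_calls_in_weaken with (S c); [lia | exact Hps1].
  - constructor; [intros Hin; specialize (Hrhs c Hin); lia | exact Hnd].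
  - intros d [<- | Hd] .
    + split; [lia|]; intros p k Hp Hcall; apply in_app_iff in Hp as [Hp | Hp];
        [specialize (B1 p k c Hp Hcall) | specialize (B2 p k c Hp Hcall)]; lia.
    + destruct (Hrhs d Hd) as [Hdr Hnc]; split; [lia|].
      intros p k Hp Hcall; apply in_app_iff in Hp as [Hp | Hp];
        [specialize (B1 p k d Hp Hcall); lia | exact (Hnc p k Hp Hcall)].
Qed.

Lemma unique_calls_in_cat_rule X lo hi ps rhs : rhs_ok lo hi ps rhs -> unique_calls_in lo hi (ps ++ [(X, rhs)]).
Proof.
  intros ((Hlo & B & U) & Hnd & Hrhs); split; [exact Hlo | split].
  - intros p k d Hp Hcall; apply in_app_iff in Hp as [Hp | [<- | []]]; [exact (B p k d Hp Hcall)|].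
    exact (proj1 (Hrhs d (nth_error_fresh_indices _ _ _ (proj1 Hcall)))).
  - assert (Hown : forall p k d, In p ps -> calls p k d -> forall k', ~ calls (X, rhs) k' d).
    { intros p k d Hp Hc k' [Hn _]; exact (proj2 (Hrhs d (nth_error_fresh_indices _ _ _ Hn)) p k Hp Hc). }
    intros p1 k1 p2 k2 d Hp1 Hp2 Hc1 Hc2.
    apply in_app_iff in Hp1 as [Hp1 | [<- | []]]; apply in_app_iff in Hp2 as [Hp2 | [<- | []]];
      [eauto | destruct (Hown _ _ _ Hp1 Hc1 _ Hc2) | destruct (Hown _ _ _ Hp2 Hc2 _ Hc1) |].
    split; [reflexivity | exact (nth_error_fresh_unique _ _ _ _ Hnd (proj1 Hc1) (proj1 Hc2))].
Qed.

Lemma wf_BSym (a : sym) : wf_bexp (BSym a) -> forall d, a <> Fr d.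
Proof. destruct a; simpl; congruence. Qed.

Definition flat_unique_calls (e : bexp) : Prop :=
  forall X c ps c', wf_bexp e -> flat X e c = (ps, c') -> unique_calls_in c c' ps.

Lemma flat_cat_list_rhs_ok es : Forall flat_unique_calls es -> wf_bexp (BCat es) ->
  forall c ps rhs c', flat_cat_list es c = (ps, rhs, c') -> rhs_ok c c' ps rhs.
Proof.
  induction 1 as [|e es He _ IH]; intros Hwf c ps rhs c' Hcat.
  - injection Hcat as <- <- <-; apply rhs_ok_nil.
  - destruct Hwf as [Hwfe Hwf]; specialize (IH Hwf).
    destruct e as [a | | | |]; cbn [flat_cat_list] in Hcat;
      [destruct (flat_cat_list es c) as [[ps0 rhs0] c0] eqn:Hes; injection Hcat as <- <- <-;
       exact (rhs_ok_atom _ _ _ _ _ (wf_BSym a Hwfe) (IH _ _ _ _ Hes)) |..];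
      destruct (flat _ _ _) as [ps1 c1] eqn:He1;
      destruct (flat_cat_list es c1) as [[ps2 rhs2] c2] eqn:Hes; injection Hcat as <- <- <-;
      exact (rhs_ok_fresh _ _ _ _ _ _ (He _ _ _ _ Hwfe He1) (IH _ _ _ _ Hes)).
Qed.

Lemma flat_alt_list_unique_calls X es : Forall flat_unique_calls es -> wf_bexp (BAlt es) ->
  forall c ps c', flat_alt_list X es c = (ps, c') -> unique_calls_in c c' ps.
Proof.
  induction 1 as [|e es He _ IH]; intros Hwf c ps c' Halt.
  - injection Halt as <- <-; apply unique_calls_in_no_calls; intros ? ? ? [].
  - destruct Hwf as [Hwfe Hwf]; cbn [flat_alt_list] in Halt.
    destruct (flat X e c) as [ps1 c1] eqn:He1.
    destruct (flat_alt_list X es c1) as [ps2 c2] eqn:Hes; injection Halt as <- <-.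
    exact (unique_calls_in_app _ _ _ _ _ (He _ _ _ _ Hwfe He1) (IH Hwf _ _ _ Hes)).
Qed.

Lemma flat_unique_calls_all e : flat_unique_calls e.
Proof.
  induction e as [a | es IH | es IH | e IH | e IH] using bexp_nested_ind;
    intros X c ps c' Hwf Hflat.
  - injection Hflat as <- <-; apply unique_calls_in_no_calls.
    intros p k d [<- | []]; exact (no_calls_atom X a (wf_BSym a Hwf) k d).
  - rewrite flat_BCat in Hflat.
    destruct (flat_cat_list es c) as [[ps0 rhs] c0] eqn:Hcat; injection Hflat as <- <-.
    exact (unique_calls_in_cat_rule X _ _ _ _ (flat_cat_list_rhs_ok es IH Hwf _ _ _ _ Hcat)).
  - rewrite flat_BAlt in Hflat; exact (flat_alt_list_unique_calls X es IH Hwf _ _ _ Hflat).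
  - cbn [flat] in Hflat; destruct (flat X e c) as [ps0 c0] eqn:He; injection Hflat as <- <-.
    apply unique_calls_in_app with c0; [exact (IH _ _ _ _ Hwf He)|].
    apply unique_calls_in_no_calls; intros p [|k] d [<- | []] [Hn _]; discriminate.
  - cbn [flat] in Hflat; destruct (flat (Fr c) e (S c)) as [ps0 c0] eqn:He.
    injection Hflat as <- <-; apply unique_calls_in_app_comm.
    apply unique_calls_in_app with (S c); [|exact (IH _ _ _ _ Hwf He)].
    change [(X, [Fr c; X]); (X, [])] with ([(X, [Fr c; X])] ++ [(X, [])]).
    apply unique_calls_in_app with (S c); [apply unique_calls_in_star_rule|].
    apply unique_calls_in_no_calls; intros p [|k] d [<- | []] [Hn _]; discriminate.
Qed.

Lemma unique_calls_flatten_from rules : (forall r, In r rules -> wf_bexp (snd r)) ->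
  forall c, unique_calls (flatten_from rules c) /\
            forall p k d, In p (flatten_from rules c) -> calls p k d -> c <= d.
Proof.
  induction rules as [|[x e] rules IH]; intros Hwf c.
  - split; [intros ? ? ? ? ? [] | intros ? ? ? []].
  - cbn [flatten_from]; destruct (flat (NT x) e c) as [ps c'] eqn:He.
    destruct (flat_unique_calls_all e _ _ _ _ (Hwf _ (or_introl eq_refl)) He) as (Hc & B & U).
    destruct (IH (fun r Hr => Hwf r (or_intror Hr)) c') as [U' B'].
    split.
    + apply unique_calls_app; [exact U | exact U' |].
      intros p1 k1 p2 k2 d Hp1 Hp2 Hc1 Hc2; specialize (B _ _ _ Hp1 Hc1); specialize (B' _ _ _ Hp2 Hc2); lia.
    + intros p k d Hp Hcall; apply in_app_iff in Hp as [Hp | Hp];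
        [specialize (B _ _ _ Hp Hcall) | specialize (B' _ _ _ Hp Hcall)]; lia.
Qed.

Lemma unique_calls_flatten rules : (forall r, In r rules -> wf_bexp (snd r)) ->
  unique_calls (flatten rules).
Proof. intros Hwf; exact (proj1 (unique_calls_flatten_from rules Hwf 0)). Qed.

End Flatten.

Scheme cps_sym_min := Minimality for cps_sym Sort Prop
  with cps_prod_min := Minimality for cps_prod Sort Prop.

Lemma skipn_nth_error (A : Type) (l : list A) k a :
  nth_error l k = Some a -> skipn k l = a :: skipn (S k) l.
Proof.
  revert k; induction l as [|b l IH]; intros [|k] H; simpl in H; try discriminate;
    [injection H as ->; reflexivity | exact (IH k H)].
Qed.

Section CPS.
Context {Sigma Nt : Type}.
Variables (G : list (prod Sigma Nt)) (trig : nat -> bool).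
Notation sym := (sym Sigma Nt).
Notation cps_sym := (cps_sym G trig).
Notation cps_prod := (cps_prod G trig).
Notation CPS := (cps_grammar G trig).
Notation H := (Hgrammar G trig).
Notation word := (word Nt).

Lemma cps_prod_in X alpha k tau :
  cps_prod X alpha k tau -> In (X, alpha) G /\ k <= length alpha.
Proof. induction 1; split; try tauto; try lia; apply IHcps_prod. Qed.

Lemma cps_prod_past_end X alpha tau : ~ cps_prod X alpha (S (length alpha)) tau.
Proof. intros Hp; apply cps_prod_in in Hp; lia. Qed.

Lemma cps_sym_tau_sym X tau : cps_sym X tau -> tau_sym G trig X tau.
Proof. intros Hs; destruct X as [a | |]; [inversion Hs; contradiction | exact Hs | exact Hs]. Qed.

Lemma tau_sym_nontrig X alpha k a tau :
  cps_prod X alpha (S k) tau -> nth_error alpha k = Some a -> ~ trigS trig a ->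
  tau_sym G trig a [].
Proof.
  intros Hp Hn Ht.
  assert (HG : symG G a).
  { exists (X, alpha); split; [exact (proj1 (cps_prod_in _ _ _ _ Hp)) | right; exact (nth_error_In _ _ Hn)]. }
  destruct a as [b | x | d]; [reflexivity | |]; exact (cps_root HG I Ht).
Qed.

Hypothesis G_unique_calls : unique_calls G.

(* Induction on the invocation tree: the caller of a triggering symbol is
   unique, so its tail context is determined by the caller's. *)
Lemma cps_sym_functional X t1 t2 : cps_sym X t1 -> cps_sym X t2 -> t1 = t2.
Proof.
  intros H1; revert t2.
  induction H1 as [X _ _ Hnt | X alpha k tau a Hp IH Hn Ht Hne | X eta tau _ IH _
                  | X alpha k tau a Hp IH Hn Ht | X alpha k tau Hp IH Hn Ht Hlen
                  | X alpha k tau a Hp IH Hn Ht Hne] using cps_sym_min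
    with (P0 := fun X alpha k t1 => forall t2, cps_prod X alpha k t2 -> t1 = t2);
    intros t2 H2.
  4-6: inversion H2; subst; try (exfalso; eapply cps_prod_past_end; eassumption);
    rewrite Hn in *;
    try match goal with Hs : Some _ = Some _ |- _ => injection Hs as <- end;
    first [reflexivity | f_equal; apply IH; assumption | contradiction | tauto].
  - inversion H2; [reflexivity | contradiction].
  - inversion H2 as [| Y beta k' tau' a' Hp' Hn' Ht' Hne']; subst; [contradiction|].
    destruct a as [| | d]; try contradiction.
    destruct (G_unique_calls (X, alpha) k (Y, beta) k' d) as [Heq ->];
      [exact (proj1 (cps_prod_in _ _ _ _ Hp)) | exact (proj1 (cps_prod_in _ _ _ _ Hp'))
      | split; assumption | split; assumption |].
    injection Heq as -> ->; exact (IH _ Hp').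
  - inversion H2; subst; [auto | exfalso; eapply cps_prod_past_end; eassumption ..].
Qed.

Lemma derivesN_Hat_inv X lam n : derivesN H [Hat X] (word lam) n ->
  exists eta beta m, n = S m /\ cps_prod X eta 0 beta /\ derivesN H beta (word lam) m.
Proof.
  inversion 1 as [Ew | u w v m (A & beta & l & r & HA & Eu & ->) Hd]; subst.
  - destruct lam; discriminate.
  - destruct l as [| b l]; [| destruct l; discriminate].
    injection Eu as <- <-; rewrite app_nil_r in Hd.
    destruct HA as [(Y & alpha & _ & HY & _) | (Y & eta & HY & Hp)]; [discriminate|].
    assert (Y = X) as -> by (destruct Y; simpl in HY; congruence).
    exists eta, beta, m; auto.
Qed.

(* Derivations are taken in H on both sides: in the triggering case the
   derivation of tau_{alpha_i} is only obtained as part of an H-derivation. *)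
Definition hat_sound (n : nat) : Prop :=
  forall X tauX lam, tau_sym G trig X tauX ->
  derivesN H [hat X] (word lam) n -> derivesN H (Plain X :: tauX) (word lam) n.

Definition dotted_sound (n : nat) : Prop :=
  forall X alpha k tauPi tauX lam, cps_prod X alpha k tauPi -> cps_sym X tauX ->
  derivesN H tauPi (word lam) n ->
  derivesN H (map (@Plain Sigma Nt) (skipn k alpha) ++ tauX) (word lam) n.

Lemma hat_sound_Hat n X tauX lam : (forall m, m < n -> dotted_sound m) -> cps_sym X tauX ->
  derivesN H [Hat X] (word lam) n -> derivesN H (Plain X :: tauX) (word lam) n.
Proof.
  intros IH Hs Hd; destruct (derivesN_Hat_inv _ _ _ Hd) as (eta & beta & m & -> & Hp & Hd').
  apply dN_step with (map (@Plain Sigma Nt) eta ++ tauX).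
  - exists (Plain X), (map (@Plain Sigma Nt) eta), [], tauX; split; [|auto].
    left; exists X, eta; split; [exact (proj1 (cps_prod_in _ _ _ _ Hp)) | auto].
  - exact (IH m (Nat.lt_succ_diag_r m) _ _ _ _ _ _ Hp Hs Hd').
Qed.

Lemma hat_sound_of_dotted_sound n : (forall m, m < n -> dotted_sound m) -> hat_sound n.
Proof.
  intros IH [a | x | d] tauX lam Htau Hd;
    [simpl in Htau; subst tauX; exact Hd | exact (hat_sound_Hat _ _ _ _ IH Htau Hd) ..].
Qed.

Lemma dotted_sound_all n : dotted_sound n.
Proof.
  induction n as [n IHn] using lt_wf_ind.
  assert (Hhat : forall m, m <= n -> hat_sound m).
  { intros m Hm; apply hat_sound_of_dotted_sound; intros; apply IHn; lia. }
  enough (Hinner : forall X alpha k tauPi, cps_prod X alpha k tauPi ->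
    forall tauX lam m, m <= n -> cps_sym X tauX -> derivesN H tauPi (word lam) m ->
    derivesN H (map (@Plain Sigma Nt) (skipn k alpha) ++ tauX) (word lam) m).
  { intros X alpha k tauPi tauX lam Hp Hs Hd; exact (Hinner _ _ _ _ Hp _ _ _ (le_n n) Hs Hd). }
  induction 1 as [X eta tau Hs _ | X alpha k tau a Hp IH Hn Ht | X alpha k tau Hp _ Hn Ht Hlen
                 | X alpha k tau a Hp IH Hn Ht Hne];
    intros tauX lam m Hm HsX Hd.
  - rewrite skipn_all, (cps_sym_functional _ _ _ Hs HsX) in *; exact Hd.
  - destruct (derivesN_app_word_inv (u := [hat a]) _ _ Hd) as (l1 & l2 & m1 & m2 & -> & -> & D1 & D2).
    rewrite (skipn_nth_error _ _ _ _ Hn), word_app.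
    apply (derivesN_app (u1 := [Plain a])).
    + exact (Hhat m1 ltac:(lia) _ _ _ (tau_sym_nontrig _ _ _ _ _ Hp Hn Ht) D1).
    + exact (IH _ _ m2 ltac:(lia) HsX D2).
  - rewrite (skipn_nth_error _ _ _ _ Hn), Hlen, skipn_all.
    exact (Hhat m Hm _ _ _ (cps_sym_tau_sym _ _ HsX) Hd).
  - pose proof (Hhat m Hm _ _ _ (cps_sym_tau_sym _ _ (cps_call Hp Hn Ht Hne)) Hd) as Ha.
    destruct (derivesN_app_word_inv (u := [Plain a]) _ _ Ha) as (l1 & l2 & m1 & m2 & -> & -> & D1 & D2).
    rewrite (skipn_nth_error _ _ _ _ Hn), word_app.
    apply (derivesN_app (u1 := [Plain a])); [exact D1 | exact (IH _ _ m2 ltac:(lia) HsX D2)].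
Qed.
End CPS.

Theorem mainTheorem2 (Sigma Nt : Type) (rules : list (Nt * bexp Sigma Nt))
  (trig : nat -> bool) :
  (forall r, In r rules -> wf_bexp (snd r)) ->
  let G := flatten rules in
  let CPS := cps_grammar G trig in
  let H := Hgrammar G trig in
  forall lam : list Sigma,
    (forall X : sym Sigma Nt, symG G X ->
       forall tauX, tau_sym G trig X tauX ->
       forall n, derivesN CPS [hat X] (word Nt lam) n ->
                 derivesN H (Plain X :: tauX) (word Nt lam) n)
    /\
    (forall (X : sym Sigma Nt) (alpha : list (sym Sigma Nt)) (k : nat),
       In (X, alpha) G -> k <= length alpha ->
       forall tauPi, cps_prod G trig X alpha k tauPi ->
       forall tauX, cps_sym G trig X tauX ->
       forall n, derivesN CPS tauPi (word Nt lam) n ->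
                 derivesN H (map (@Plain Sigma Nt) (skipn k alpha) ++ tauX) (word Nt lam) n).
Proof.
  intros Hwf G CPS H lam.
  pose proof (unique_calls_flatten rules Hwf) as Huniq.
  assert (HCPS_H : forall u v n, derivesN CPS u v n -> derivesN H u v n).
  { intros u v n; apply derivesN_mono; intros A beta Hb; right; exact Hb. }
  split.
  - intros X _ tauX Htau n Hd.
    exact (hat_sound_of_dotted_sound G trig n (fun m _ => dotted_sound_all G trig Huniq m)
             X tauX lam Htau (HCPS_H _ _ _ Hd)).
  - intros X alpha k _ _ tauPi Hp tauX Hs n Hd.
    exact (dotted_sound_all G trig Huniq n X alpha k tauPi tauX lam Hp Hs (HCPS_H _ _ _ Hd)).
Qed.
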